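(* Consider the coupled circuit DAE \begin{align*} \mathbf{A}_\mathrm{C}\tfrac{\mathrm{d}}{\mathrm{d}t}\mathbf{q}(\mathbf{A}_\mathrm{C}^{\top}\mathbf{e},t)+\mathbf{A}_\mathrm{R}\mathbf{g}(\mathbf{A}_\mathrm{R}^{\top}\mathbf{e},t)+\mathbf{A}_\mathrm{L}\mathbf{i}_\mathrm{L}+\mathbf{A}_\mathrm{V}\mathbf{i}_\mathrm{V}+\mathbf{A}_\lambda\mathbf{i}_\lambda+\mathbf{A}_\mathrm{I}\mathbf{i}_\mathrm{src}(t)&=0,\\ \tfrac{\mathrm{d}}{\mathrm{d}t}\phi_\mathrm{L}(\mathbf{i}_\mathrm{L},t)-\mathbf{A}_\mathrm{L}^{\top}\mathbf{e}&=0,\\ \mathbf{A}_\mathrm{V}^{\top}\mathbf{e}-\mathbf{v}_\mathrm{src}(t)&=0,\\ \mathbf{F}\big(\tfrac{\mathrm{d}}{\mathrm{d}t}\mathbf{x}_\lambda,\tfrac{\mathrm{d}}{\mathrm{d}t}\mathbf{i}_\lambda,\mathbf{x}_\lambda,\mathbf{i}_\lambda,\mathbf{A}_\lambda^{\top}\mathbf{e},t\big)&=0, \end{align*} with incidence matrix $\mathbf{A}=[\mathbf{A}_\mathrm{C}\ \mathbf{A}_\mathrm{R}\ \mathbf{A}_\mathrm{L}\ \mathbf{A}_\mathrm{V}\ \mathbf{A}_\mathrm{I}\ \mathbf{A}_\lambda]$, satisfying $\ker(\mathbf{A}_\mathrm{R}\ \mathbf{A}_\mathrm{C}\ \mathbf{A}_\mathrm{V}\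 \mathbf{A}_\mathrm{L}\ \mathbf{A}_\lambda)^{\top}=\{0\}$, $\ker\mathbf{A}_\mathrm{V}=\{0\}$, with $\partial\mathbf{g}/\partial\mathbf{v}_\mathrm{R}$, $\partial\phi_\mathrm{L}/\partial\mathbf{i}_\mathrm{L}$, $\partial\mathbf{q}/\partial\mathbf{v}_\mathrm{C}$ positive definite, all functions sufficiently smooth, and where $\mathbf{F}$ describes an inductance-like element. Suppose moreover that the element's DAE has the structure $$\mathbf{F}\big(\tfrac{\mathrm{d}}{\mathrm{d}t}\mathbf{x}_\lambda,\tfrac{\mathrm{d}}{\mathrm{d}t}\mathbf{i}_\lambda,\mathbf{x}_\lambda,\mathbf{i}_\lambda,\mathbf{v}_\lambda,t\big)=\tilde{\mathbf{F}}\big(\tfrac{\mathrm{d}}{\mathrm{d}t}\mathbf{x}_\lambda,\tfrac{\mathrm{d}}{\mathrm{d}t}\mathbf{i}_\lambda,\mathbf{x}_\lambda,\mathbf{i}_\lambda,t\big)+\mathbf{B}\mathbf{v}_\lambda$$ with a constant matrix $\mathbf{B}\in\mathbb{R}^{(n_\mathrm{dof}+n_\lambda)\times n_\lambda}$ (the voltage enters linearly). Then, whenever the inductance-like element is contained in a cutset consisting only of inductors, current sources and inductance-like elements (an LI$\lambda$-cutset), the coupled system has linear index-2 components.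
   Context: Inductance-like element: a device described by a DAE $\mathbf{F}(\frac{\mathrm{d}}{\mathrm{d}t}\mathbf{x}_\lambda,\frac{\mathrm{d}}{\mathrm{d}t}\mathbf{i}_\lambda,\mathbf{x}_\lambda,\mathbf{i}_\lambda,\mathbf{v}_\lambda,t)=0$ with $\mathbf{x}_\lambda:\mathcal{I}\to\mathbb{R}^{n_\mathrm{dof}}$, $\mathbf{i}_\lambda,\mathbf{v}_\lambda:\mathcal{I}\to\mathbb{R}^{n_\lambda}$, such that at most one differentiation $\frac{\mathrm{d}}{\mathrm{d}t}\mathbf{F}=0$ is needed to obtain from $\mathbf{F}=0$ and $\frac{\mathrm{d}}{\mathrm{d}t}\mathbf{F}=0$ a system $\frac{\mathrm{d}}{\mathrm{d}t}\mathbf{x}_\lambda=\mathbf{f}_\mathbf{x}(\mathbf{x}_\lambda,\mathbf{i}_\lambda,\mathbf{v}_\lambda,t)$, $\frac{\mathrm{d}}{\mathrm{d}t}\phi(\mathbf{i}_\lambda,\mathbf{x}_\lambda,t)=\mathbf{f}_\phi(\mathbf{x}_\lambda,\mathbf{i}_\lambda,\mathbf{v}_\lambda,t)$, where $\partial\phi/\partial\mathbf{i}_\lambda$ is regular and $\frac{\partial}{\partial\mathbf{v}_\lambda}\Big((\frac{\partial\phi}{\partial\mathbf{i}_\lambda})^{-1}(-\frac{\partial\phi}{\partial\mathbf{x}_\lambda}\mathbf{f}_\mathbf{x}-\frac{\partial\phi}{\partial t}+\mathbf{f}_\phi)\Big)$ is positive definite ($\mathbf{x}^\top\mathbf{M}\mathbf{x}>0$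 for $\mathbf{x}\ne0$). The index-2 components of the coupled system are the node potentials $\mathbf{Q}_\mathrm{CRV}\mathbf{e}$, where $\mathbf{Q}_\mathrm{CRV}$ is a projector onto $\ker(\mathbf{A}_\mathrm{C}\ \mathbf{A}_\mathrm{R}\ \mathbf{A}_\mathrm{V})^\top$, and the currents $\bar{\mathbf{Q}}_\mathrm{V-C}\mathbf{i}_\mathrm{V}$, where $\bar{\mathbf{Q}}_\mathrm{V-C}$ is a projector onto $\ker\mathbf{Q}_\mathrm{C}^\top\mathbf{A}_\mathrm{V}$ and $\mathbf{Q}_\mathrm{C}$ a projector onto $\ker\mathbf{A}_\mathrm{C}^\top$. ''Linear index-2 components'' means these index-2 components enter the system equations only linearly. *)

From HB Require Import structures.
From mathcomp Require Import all_boot all_order all_algebra.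
From mathcomp Require Import all_classical all_reals all_analysis.
Set Implicit Arguments. Unset Strict Implicit. Unset Printing Implicit Defensive.
Import Order.TTheory GRing.Theory Num.Theory.
Import numFieldNormedType.Exports.
Local Open Scope ring_scope.

Section Defs.
Variable R : realType.

Definition jac (n m : nat) (f : 'cV[R]_n -> 'cV[R]_m) (x : 'cV[R]_n)
  : 'M[R]_(m, n) :=
  \matrix_(i < m, j < n) ('d f x (delta_mx j (0 : 'I_1)) : 'cV[R]_m) i 0.

(* positive definite: x^T M x > 0 for x <> 0 (no symmetry required) *)
Definition posdefmx (n : nat) (M : 'M[R]_n) : Prop :=
  forall y : 'cV[R]_n, y != 0 -> 0 < (y^T *m M *m y) 0 0.

Definition posdef_jac (n : nat) (f : 'cV[R]_n -> 'cV[R]_n) (x : 'cV[R]_n) : Prop :=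
  differentiable f x /\ posdefmx (jac f x).

Definition projector_onto (n : nat) (Q : 'M[R]_n) (P : 'cV[R]_n -> Prop) : Prop :=
  Q *m Q = Q /\ forall y : 'cV[R]_n, (exists z, y = Q *m z) <-> P y.

(* (reduced) incidence matrix block: entries in {-1,0,1}, every column has
   at most one +1 and at most one -1 (the removed ground node carries the rest) *)
Definition incidence_block (n b : nat) (M : 'M[R]_(n, b)) : Prop :=
  forall j : 'I_b,
    (forall i, M i j = 0 \/ M i j = 1 \/ M i j = -1) /\
    (forall i i', M i j = 1 -> M i' j = 1 -> i = i') /\
    (forall i i', M i j = -1 -> M i' j = -1 -> i = i').

Definition inductance_like (ndof nl : nat)
  (F : 'cV[R]_ndof -> 'cV[R]_nl -> 'cV[R]_ndof -> 'cV[R]_nl -> 'cV[R]_nl -> R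
       -> 'cV[R]_(ndof + nl)) : Prop :=
  exists (fx : 'cV[R]_ndof -> 'cV[R]_nl -> 'cV[R]_nl -> R -> 'cV[R]_ndof)
         (fphi : 'cV[R]_ndof -> 'cV[R]_nl -> 'cV[R]_nl -> R -> 'cV[R]_nl)
         (phi : 'cV[R]_nl -> 'cV[R]_ndof -> R -> 'cV[R]_nl),
    (forall i x t, differentiable (fun i' => phi i' x t) i /\
                   differentiable (fun x' => phi i x' t) x /\
                   jac (fun i' => phi i' x t) i \in unitmx) /\
    (forall x i v t,
       posdef_jac (fun v' =>
         invmx (jac (fun i' => phi i' x t) i) *m
           (- (jac (fun x' => phi i x' t) x *m fx x i v' t)
            - derive1 (fun s => phi i x s) t + fphi x i v' t)) v) /\
    (forall (a b : R) (xl : R -> 'cV[R]_ndof) (il vl : R -> 'cV[R]_nl),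
       (forall t, a < t < b ->
          derivable xl t 1 /\ derivable il t 1 /\
          derivable (derive1 xl) t 1 /\ derivable (derive1 il) t 1) ->
       (forall t, a < t < b ->
          F (derive1 xl t) (derive1 il t) (xl t) (il t) (vl t) t = 0) ->
       forall t, a < t < b ->
          derive1 xl t = fx (xl t) (il t) (vl t) t /\
          derive1 (fun s => phi (il s) (xl s) s) t = fphi (xl t) (il t) (vl t) t).

(* Residual of the coupled circuit DAE, evaluated along trajectories
   e, iL, iV, xl, il at time t, stacked into one column vector
   [KCL; inductor eqs; voltage source eqs; element eqs]. *)
Definition circuit_residual (n nC nR nL nV nI nl ndof : nat)
  (AC : 'M[R]_(n, nC)) (AR : 'M[R]_(n, nR)) (AL : 'M[R]_(n, nL))
  (AV : 'M[R]_(n, nV)) (AI : 'M[R]_(n, nI)) (Al : 'M[R]_(n, nl))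
  (q : 'cV[R]_nC -> R -> 'cV[R]_nC) (g : 'cV[R]_nR -> R -> 'cV[R]_nR)
  (phiL : 'cV[R]_nL -> R -> 'cV[R]_nL)
  (isrc : R -> 'cV[R]_nI) (vsrc : R -> 'cV[R]_nV)
  (F : 'cV[R]_ndof -> 'cV[R]_nl -> 'cV[R]_ndof -> 'cV[R]_nl -> 'cV[R]_nl -> R
       -> 'cV[R]_(ndof + nl))
  (e : R -> 'cV[R]_n) (iL : R -> 'cV[R]_nL) (iV : R -> 'cV[R]_nV)
  (xl : R -> 'cV[R]_ndof) (il : R -> 'cV[R]_nl) (t : R)
  : 'cV[R]_(n + (nL + (nV + (ndof + nl)))) :=
  col_mx
    (AC *m derive1 (fun s => q (AC^T *m e s) s) t + AR *m g (AR^T *m e t) t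
     + AL *m iL t + AV *m iV t + Al *m il t + AI *m isrc t)
  (col_mx
    (derive1 (fun s => phiL (iL s) s) t - AL^T *m e t)
  (col_mx
    (AV^T *m e t - vsrc t)
    (F (derive1 xl t) (derive1 il t) (xl t) (il t) (Al^T *m e t) t))).

End Defs.

From HB Require Import structures.
From mathcomp Require Import all_boot all_order all_algebra.
From mathcomp Require Import all_classical all_reals all_analysis.
Set Implicit Arguments.
Unset Strict Implicit.
Unset Printing Implicit Defensive.
Import Order.TTheory GRing.Theory Num.Theory.
Import numFieldNormedType.Exports.
Local Open Scope ring_scope.

(* The capacitor and resistor laws only see the node potentials through
   [AC^T e] and [AR^T e], and the projector [QCRV] annihilates both.  Every
   other occurrence of [e] and [iV] in the circuit equations is linear (the
   inductor voltages [AL^T e], the source constraint [AV^T e], the current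
   [AV iV] in Kirchhoff's law and, by the structure of the element, its
   voltage term [B Al^T e]).  Splitting [e = (1 - QCRV) e + QCRV e] and
   [iV = (1 - QVC) iV + QVC iV] therefore leaves a residual that is affine in
   the index-2 components.  The cutset hypothesis is what makes these
   components nontrivial. *)

Lemma projector_onto_range (R : realType) (n : nat) (Q : 'M[R]_n)
    (P : 'cV[R]_n -> Prop) :
  projector_onto Q P -> forall y, P (Q *m y).
Proof. by move=> [_ rangeQ] y; apply/rangeQ; exists y. Qed.

Lemma tr_row_mx_mul_eq0 (R : pzRingType) (n p1 p2 : nat)
    (A1 : 'M[R]_(n, p1)) (A2 : 'M[R]_(n, p2)) (y : 'cV[R]_n) :
  (row_mx A1 A2)^T *m y = 0 -> A1^T *m y = 0 /\ A2^T *m y = 0.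
Proof.
by rewrite tr_row_mx mul_col_mx => /eqP; rewrite col_mx_eq0 => /andP[/eqP-> /eqP->].
Qed.

Section CircuitResidual.
Variables (R : realType) (n nC nR nL nV nI nl ndof : nat).
Variables (AC : 'M[R]_(n, nC)) (AR : 'M[R]_(n, nR)) (AL : 'M[R]_(n, nL)).
Variables (AV : 'M[R]_(n, nV)) (AI : 'M[R]_(n, nI)) (Al : 'M[R]_(n, nl)).
Variables (q : 'cV[R]_nC -> R -> 'cV[R]_nC) (g : 'cV[R]_nR -> R -> 'cV[R]_nR).
Variables (phiL : 'cV[R]_nL -> R -> 'cV[R]_nL).
Variables (isrc : R -> 'cV[R]_nI) (vsrc : R -> 'cV[R]_nV).
Variables (F : 'cV[R]_ndof -> 'cV[R]_nl -> 'cV[R]_ndof -> 'cV[R]_nl -> 'cV[R]_nl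
               -> R -> 'cV[R]_(ndof + nl)).
Variables (Ft : 'cV[R]_ndof -> 'cV[R]_nl -> 'cV[R]_ndof -> 'cV[R]_nl -> R
                -> 'cV[R]_(ndof + nl)).
Variable (B : 'M[R]_(ndof + nl, nl)).
Hypothesis F_linear_in_voltage :
  forall dx di x i v t, F dx di x i v t = Ft dx di x i t + B *m v.

Definition residual_linear_part : 'M[R]_(n + (nL + (nV + (ndof + nl))), n + nV) :=
  col_mx (row_mx 0 AV)
 (col_mx (row_mx (- AL^T) 0)
 (col_mx (row_mx AV^T 0)
         (row_mx (B *m Al^T) 0))).

Local Notation residual := (circuit_residual AC AR AL AV AI Al q g phiL isrc vsrc F).

Lemma circuit_residual_shift (e e' : R -> 'cV[R]_n) (iL : R -> 'cV[R]_nL)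
    (iV iV' : R -> 'cV[R]_nV) (xl : R -> 'cV[R]_ndof) (il : R -> 'cV[R]_nl)
    (t : R) :
  (forall s, AC^T *m e s = AC^T *m e' s) -> AR^T *m e t = AR^T *m e' t ->
  residual e iL iV xl il t =
  residual e' iL iV' xl il t
  + residual_linear_part *m col_mx (e t - e' t) (iV t - iV' t).
Proof.
move=> eqC eqR; rewrite /circuit_residual.
have -> : (fun s => q (AC^T *m e s) s) = (fun s => q (AC^T *m e' s) s).
  by apply: funext => s; rewrite eqC.
rewrite eqR !F_linear_in_voltage.
rewrite !mul_col_mx !mul_row_col !mul0mx !add0r !addr0 !add_col_mx.
rewrite -mulmxA !mulmxBr !mulNmx.
congr col_mx; last congr col_mx; last congr col_mx.
- by rewrite [RHS](@GRing.add 'cV[R]_n).[ACl (1*2*3*(4*7)*5*6)] subrKC.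
- by rewrite -addrA subrKC.
- by rewrite [RHS](@GRing.add 'cV[R]_nV).[ACl (1*3)*2] subrKC.
- by rewrite -addrA subrKC.
Qed.

End CircuitResidual.

Theorem proposition1 (R : realType) (n nC nR nL nV nI nl ndof : nat)
  (AC : 'M[R]_(n, nC)) (AR : 'M[R]_(n, nR)) (AL : 'M[R]_(n, nL))
  (AV : 'M[R]_(n, nV)) (AI : 'M[R]_(n, nI)) (Al : 'M[R]_(n, nl))
  (q : 'cV[R]_nC -> R -> 'cV[R]_nC) (g : 'cV[R]_nR -> R -> 'cV[R]_nR)
  (phiL : 'cV[R]_nL -> R -> 'cV[R]_nL)
  (isrc : R -> 'cV[R]_nI) (vsrc : R -> 'cV[R]_nV)
  (F : 'cV[R]_ndof -> 'cV[R]_nl -> 'cV[R]_ndof -> 'cV[R]_nl -> 'cV[R]_nl -> R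
       -> 'cV[R]_(ndof + nl))
  (Ft : 'cV[R]_ndof -> 'cV[R]_nl -> 'cV[R]_ndof -> 'cV[R]_nl -> R
        -> 'cV[R]_(ndof + nl))
  (B : 'M[R]_(ndof + nl, nl))
  (QCRV : 'M[R]_n) (QC : 'M[R]_n) (QVC : 'M[R]_nV) :
  (* A = [AC AR AL AV AI Al] is a (reduced) incidence matrix *)
  incidence_block AC -> incidence_block AR -> incidence_block AL ->
  incidence_block AV -> incidence_block AI -> incidence_block Al ->
  (* ker (AR AC AV AL Al)^T = {0} *)
  (forall y : 'cV[R]_n,
     (row_mx AR (row_mx AC (row_mx AV (row_mx AL Al))))^T *m y = 0 -> y = 0) ->
  (* ker AV = {0} *)
  (forall y : 'cV[R]_nV, AV *m y = 0 -> y = 0) ->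
  (* dg/dvR, dphiL/diL, dq/dvC positive definite *)
  (forall v t, posdef_jac (fun v' => g v' t) v) ->
  (forall i t, posdef_jac (fun i' => phiL i' t) i) ->
  (forall v t, posdef_jac (fun v' => q v' t) v) ->
  (* F describes an inductance-like element *)
  inductance_like F ->
  (* the voltage enters linearly with a constant matrix B *)
  (forall dx di x i v t, F dx di x i v t = Ft dx di x i t + B *m v) ->
  (* the element lies in an LI-lambda cutset: a node set (indicator y of
     non-ground nodes) whose cut contains no C, R, V branch but some
     branch of the element *)
  (exists y : 'cV[R]_n,
     (forall k, y k 0 = 0 \/ y k 0 = 1) /\
     AC^T *m y = 0 /\ AR^T *m y = 0 /\ AV^T *m y = 0 /\ Al^T *m y != 0) ->
  (* projectors defining the index-2 components *)
  projector_onto QCRV (fun y => (row_mx AC (row_mx AR AV))^T *m y = 0) ->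
  projector_onto QC (fun y => AC^T *m y = 0) ->
  projector_onto QVC (fun y => (QC^T *m AV) *m y = 0) ->
  (* conclusion: the index-2 components QCRV e and QVC iV (and their
     derivatives) enter the system equations only linearly *)
  exists (K1 K2 : 'M[R]_(n + (nL + (nV + (ndof + nl))), n + nV)),
    forall (e : R -> 'cV[R]_n) (iL : R -> 'cV[R]_nL) (iV : R -> 'cV[R]_nV)
           (xl : R -> 'cV[R]_ndof) (il : R -> 'cV[R]_nl) (t : R),
      let z := fun s => col_mx (QCRV *m e s) (QVC *m iV s) in
      circuit_residual AC AR AL AV AI Al q g phiL isrc vsrc F e iL iV xl il t =
      circuit_residual AC AR AL AV AI Al q g phiL isrc vsrc F
        (fun s => (1%:M - QCRV) *m e s) iL (fun s => (1%:M - QVC) *m iV s) xl il t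
      + K1 *m derive1 z t + K2 *m z t.
Proof.
move=> _ _ _ _ _ _ _ _ _ _ _ _ F_linear _ QCRV_proj _ _.
have QCRV_ker (y : 'cV[R]_n) : AC^T *m (QCRV *m y) = 0 /\ AR^T *m (QCRV *m y) = 0.
  by case/tr_row_mx_mul_eq0: (projector_onto_range QCRV_proj y) => -> /tr_row_mx_mul_eq0[-> _].
have compl_proj m (Q : 'M[R]_m) x : (1%:M - Q) *m x = x - Q *m x.
  by rewrite mulmxBl mul1mx.
exists 0, (residual_linear_part AL AV Al B) => e iL iV xl il t z.
set e' := fun s => (1%:M - QCRV) *m e s; set iV' := fun s => (1%:M - QVC) *m iV s.
rewrite mul0mx addr0.
rewrite (circuit_residual_shift AL AV AI Al q g phiL isrc vsrc F_linear (e' := e') iL iV iV').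
- by rewrite /z /e' /iV' !compl_proj !subKr.
- by move=> s; rewrite /e' compl_proj mulmxBr (QCRV_ker _).1 subr0.
- by rewrite /e' compl_proj mulmxBr (QCRV_ker _).2 subr0.
Qed.
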